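(* Let $G=(V,E)$ be an instance of the cycle highway problem with a single valuation (all valuations equal to $1$). Let $\mathbf p$ be the price vector output by the algorithm Cyc_Single_Val described in the context. Then \[ \mathrm{Opt}_{\rm coup}(G)\le 2.747\cdot\mathrm{Profit}_{\rm coup}(\mathbf p). \]
   Context: A (reduced) instance of the cycle highway problem is given by items $V=[1,n]=\{1,\dots,n\}$ arranged on a cycle $1\to2\to\dots\to n\to1$ and a finite multiset $E=\{e_1,\dots,e_m\}$ of customers, each a contiguous arc of the cycle ($[j_s,j_t]$ or $[j_t,n]\cup[1,j_s]$ with $1\le j_s\le j_t\le n$), each with valuation $w_j$; ''single valuation'' means all $w_j$ are equal, normalized to $w_j=1$. The line highway problem is the special case where items form a line and each customer is an interval of it. For a price vector $\mathbf p\in\mathbb R^n$ (negative prices allowed), $p(e_j)=\sum_{i\in e_j}p_i$, $\mathrm{Profit}_{\rm coup}(\mathbf p)=\sum_{j:\,w_j\ge p(e_j)}\max\{p(e_j),0\}$, $\mathrm{Opt}_{\rm coup}(G)=\max_{\mathbf p}\mathrm{Profit}_{\rm coup}(\mathbf p)$. For a line instance on items $1,\dots,k$, its DAG representation has vertices $u_0,\dots,u_k$ and an arc $u_{a-1}\to u_c$ for each customer $[a,c]$; partial sums $s_0,\dots,s_k$ give prices $p_i=s_i-s_{i-1}$. Subroutine BBCH (Balcan et al.): on a line instance with all valuations $1$, compute a directed cut $(A,B)$ of the DAG representation using the Feige–Goemans max-directed-cut approximation algorithm, with $u_0$ placed in $A$ (moving $u_0$, which has no incoming arcs, to $A$ never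 loses cut arcs); set partial sums $0$ on $A$ and $1$ on $B$; output the induced prices. It is known (Balcan et al.) that its coupon profit is at least $\mathrm{Opt}_{\rm coup}/a$ with $a\approx 2.33$. Algorithm Cyc_Single_Val: (1) choose an item $h\in V$ arbitrarily; (2) let $E_{\rm in}$ be the customers containing $h$ and $V_{\rm in}$ the union of their items; (3) let $E_{\rm out}$ be the customers not containing $h$ and $V_{\rm out}$ the union of their items; (4) let $\boldsymbol\sigma$ give price $1$ to $h$ and $0$ to every other item; (5) regard $G_{\rm out}=(V_{\rm out},E_{\rm out})$ as a line highway instance with single valuation (items of $V_{\rm out}$ ordered along the cycle starting just after $h$); (6) run BBCH on $G_{\rm out}$ to get prices $\boldsymbol\tau_{\rm out}$ on $V_{\rm out}$; (7) for each $x\in\{-1,0,1,2\}$ let $\boldsymbol\tau^x_{\rm in}$ give price $x$ to $h$ and $0$ to all items of $V_{\rm in}\setminus(V_{\rm out}\cup\{h\})$, choose $\boldsymbol\tau_{\rm in}$ among these maximizing coupon profit, and let $\boldsymbol\tau=(\boldsymbol\tau_{\rm out},\boldsymbol\tau_{\rm in})$ (items in neither set priced $0$); (8) output $\mathbf p\in\{\boldsymbol\sigma,\boldsymbol\tau\}$ with larger $\mathrm{Profit}_{\rm coup}$. *)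

From mathcomp Require Import all_boot all_order all_algebra.
From mathcomp Require Import reals.
Set Implicit Arguments. Unset Strict Implicit. Unset Printing Implicit Defensive.
Import Order.TTheory GRing.Theory Num.Theory.
Local Open Scope ring_scope.

(* A customer: an arc of the cycle 1 -> 2 -> ... -> n -> 1 given by
   1 <= cs <= ct <= n; if cwrap = false it is [cs, ct], otherwise it is
   [ct, n] \cup [1, cs]. *)
Record customer := Customer { cs : nat; ct : nat; cwrap : bool }.

Definition valid_cust (n : nat) (e : customer) : bool :=
  (1 <= cs e)%N && (cs e <= ct e)%N && (ct e <= n)%N.

Definition in_cust (n : nat) (e : customer) (i : nat) : bool :=
  if cwrap e then ((ct e <= i)%N && (i <= n)%N) || ((1 <= i)%N && (i <= cs e)%N)
  else (cs e <= i)%N && (i <= ct e)%N.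

Section Prices.
Variable R : realType.

(* price vectors are functions nat -> R, only items 1..n matter *)
Definition pe (n : nat) (p : nat -> R) (e : customer) : R :=
  \sum_(1 <= i < n.+1 | in_cust n e i) p i.

Definition profit_coup (n : nat) (E : seq customer) (p : nat -> R) : R :=
  \sum_(e <- E) (if pe n p e <= 1 then Num.max (pe n p e) 0 else 0).

Definition sigma_price (h : nat) : nat -> R := fun i => if i == h then 1 else 0.
End Prices.

Definition E_in (n h : nat) (E : seq customer) := [seq e <- E | in_cust n e h].
Definition E_out (n h : nat) (E : seq customer) := [seq e <- E | ~~ in_cust n e h].

(* items other than h in the cycle order starting just after h:
   h+1, ..., n, 1, ..., h-1 *)
Definition lineseq (n h : nat) : seq nat :=
  [seq ((h + j).-1 %% n).+1 | j <- iota 1 n.-1].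

Definition Vout (n h : nat) (E : seq customer) : seq nat :=
  [seq i <- lineseq n h | has (fun e => in_cust n e i) (E_out n h E)].

(* DAG representation of G_out on vertices u_0..u_k: a customer of E_out whose
   items are v_a, ..., v_c gives the arc u_(a-1) -> u_c; we return (a-1, c). *)
Definition dag_arc (n h : nat) (E : seq customer) (e : customer) : nat * nat :=
  let vo := Vout n h E in
  let a1 := find (in_cust n e) vo in
  (a1, (a1 + count (in_cust n e) vo)%N).

(* value of the directed cut (A, B) where B = {u_j | Bset j}: number of arcs
   (with multiplicity) going from A to B *)
Definition dicut_value (n h : nat) (E : seq customer) (Bset : nat -> bool) : nat :=
  count (fun e => ~~ Bset (dag_arc n h E e).1 && Bset (dag_arc n h E e).2)
        (E_out n h E).

Section Tau.
Variable R : realType.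

(* partial sums s_j = [u_j \in B]; price of v_j is s_j - s_(j-1);
   tau^x: price x on h, tau_out on V_out, 0 elsewhere *)
Definition tau_price (n h : nat) (E : seq customer) (Bset : nat -> bool) (x : R)
  : nat -> R :=
  fun i =>
    if i == h then x
    else let vo := Vout n h E in
         if i \in vo then
           let j := (index i vo).+1 in
           ((Bset j)%:R - (Bset j.-1)%:R)
         else 0.
End Tau.

(* Feige--Goemans approximation ratio for MAX DICUT *)
Definition FG_ratio {R : realType} : R := 859%:R / 1000%:R.

From HB Require Import structures.
From mathcomp Require Import all_boot all_order all_algebra.
From mathcomp Require Import reals.
From mathcomp Require Import zify ring lra.
Set Implicit Arguments. Unset Strict Implicit. Unset Printing Implicit Defensive.
Import Order.TTheory GRing.Theory Num.Theory.

(* Split the customers into E_in (those containing h) and E_out.  The vector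
   sigma earns 1 from every customer of E_in.  Under tau^y a customer of E_out
   pays 1 or 0 according to whether its arc of the DAG is cut forward by
   (A, B), so tau^y earns the cut value D on E_out; a customer of E_in pays
   y + t with t in {-1, 0, 1, 2} independent of y, so one of the four choices
   of y makes it pay exactly 1, and the best tau earns at least D + |E_in|/4.
   Conversely, any price vector q earns at most |E_in| on E_in, and on the line
   instance E_out at most twice the maximum directed cut: rounding the partial
   sums S_j of q to the parity of floor (S_j + k/m), k < m, yields m cuts that
   together with their complements cut every arc of price in [0, 1] about m
   times its price.  Hence Opt <= |E_in| + 2D/0.859, which is at most
   2.747 * max (|E_in|, D + |E_in|/4). *)

Definition customer_tuple (e : customer) := (cs e, ct e, cwrap e).
Definition tuple_customer (t : nat * nat * bool) := Customer t.1.1 t.1.2 t.2.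
Lemma customer_tupleK : cancel customer_tuple tuple_customer. Proof. by case. Qed.
HB.instance Definition _ := Equality.copy customer (can_type customer_tupleK).

Definition nth_convex (T : Type) (x0 : T) (P : pred T) (s : seq T) :=
  forall i j l, i <= j <= l -> l < size s ->
    P (nth x0 s i) -> P (nth x0 s l) -> P (nth x0 s j).

Lemma filter_nth_convex (T : Type) (x0 : T) (P : pred T) (s : seq T) :
  nth_convex x0 P s -> filter P s = take (count P s) (drop (find P s) s).
Proof.
elim: s => [|x s IH] //= convex_xs.
have convex_s : nth_convex x0 P s.
  by move=> i j l ijl ls; apply: (convex_xs i.+1 j.+1 l.+1).
case: ifP => Px; last by rewrite add0n IH.
rewrite drop0 add1n /= IH //; congr cons.
have [hasPs|] := boolP (has P s); last first.
  by rewrite has_count -leqNgt leqn0 => /eqP ->; rewrite !take0.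
have Ps0 : P (nth x0 s 0).
  by apply: (convex_xs 0 1 (find P s).+1) => //=; rewrite ?ltnS -?has_find ?nth_find.
suff -> : find P s = 0 by rewrite drop0.
by case: s hasPs Ps0 {IH convex_xs convex_s} => //= y s' _ ->.
Qed.

Section Telescope.
Variables (R : zmodType) (T : Type) (x0 : T) (s : seq T) (g : T -> R) (u : nat -> R).
Hypothesis g_increment : forall j, j < size s -> g (nth x0 s j) = (u j.+1 - u j)%R.

Lemma telescope_take_drop a c :
  a + c <= size s -> (\sum_(i <- take c (drop a s)) g i = u (a + c) - u a)%R.
Proof.
move=> acs; rewrite (big_nth x0) size_take size_drop.
rewrite (_ : (if _ then _ else _) = c); last by case: ifP; lia.
rewrite big_mkord (eq_bigr (fun j : 'I_c => u (a + j.+1) - u (a + j)))%R.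
  rewrite -(big_mkord xpredT (fun j => u (a + j.+1) - u (a + j))%R).
  by rewrite (telescope_sumr (fun k => u (a + k))) // addn0.
by move=> [j jc] _ /=; rewrite nth_take // nth_drop g_increment ?addnS //; lia.
Qed.

Lemma telescope_seq : (\sum_(i <- s) g i = u (size s) - u 0)%R.
Proof. by have := @telescope_take_drop 0 (size s) (leqnn _); rewrite drop0 take_size. Qed.

Lemma telescope_interval (P : pred T) : nth_convex x0 P s ->
  (\sum_(i <- s | P i) g i = u (find P s + count P s) - u (find P s))%R.
Proof.
move=> convexP; rewrite -big_filter (filter_nth_convex convexP).
apply: telescope_take_drop; have := size_filter P s.
by rewrite (filter_nth_convex convexP) size_take size_drop; have := find_size P s; case: ifP; lia.
Qed.
End Telescope.

Lemma sumr_bool_count (R : pzSemiRingType) (T : Type) (s : seq T) (P : pred T) :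
  (\sum_(x <- s) (P x)%:R = (count P s)%:R :> R)%R.
Proof. by rewrite -sum1_count natr_sum [RHS]big_mkcond; apply: eq_bigr => x _; case: (P x). Qed.

Lemma le_natmul_slack (R : archiRealFieldType) (a b c : R) : (0 <= b)%R ->
  (forall m : nat, (0 < m)%N -> m%:R * a - b <= m%:R * c :> R)%R -> (a <= c)%R.
Proof.
move=> b_ge0 slack; rewrite leNgt; apply/negP => ca.
have d_gt0 : (0 < a - c)%R by rewrite subr_gt0.
have := archi_boundP (divr_ge0 b_ge0 (ltW d_gt0)).
set m := Num.Def.archi_bound _; rewrite ltr_pdivrMr // => bm.
by have := slack m isT; rewrite mulrBr in bm; lra.
Qed.

Section ParityRounding.
Local Open Scope ring_scope.
Variable m : nat.
Hypothesis m_gt0 : (0 < m)%N.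

Let divm (z : int) := (z %/ m%:Z)%Z.

Lemma sum_divz_succ (Y : int) :
  \sum_(k < m) divm (Y + 1 + k%:Z) = \sum_(k < m) divm (Y + k%:Z) + 1.
Proof.
have m_neq0 : m%:Z != 0 by rewrite eqz_nat -lt0n.
pose F (k : nat) := divm (Y + k%:Z).
have Fm : F m = F 0%N + 1.
  by rewrite /F /divm addr0 (_ : Y + m%:Z = 1 * m%:Z + Y) ?divzMDl 1?addrC //; ring.
have := erefl (\sum_(0 <= i < m.+1) F i).
rewrite {1}big_nat_recl // big_nat_recr //= Fm addrCA => /addrI.
rewrite !big_mkord => <-; apply: eq_bigr => k _; rewrite /F; congr divm; lia.
Qed.

Lemma sum_divzD (X : int) (d : nat) :
  \sum_(k < m) divm (X + d%:Z + k%:Z) = \sum_(k < m) divm (X + k%:Z) + d%:Z.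
Proof.
elim: d => [|d IH]; first by rewrite -[0%N%:Z]/(0 : int) !addr0.
by rewrite intS (addrC 1) !addrA sum_divz_succ IH.
Qed.

Lemma odd_abszS (z : int) : odd `|z + 1| = ~~ odd `|z|.
Proof.
case: z => [k|k] /=; first by rewrite addn1.
by rewrite NegzE intS opprD addrAC addNr add0r abszN negbK.
Qed.

Lemma le_odd_abs_change (z1 z2 : int) :
  z1 <= z2 <= z1 + 1 -> z2 - z1 <= (odd `|z1| != odd `|z2| : nat)%:Z.
Proof.
case/andP=> z12 z21; have [->|neq21] := eqVneq z2 z1; first by rewrite subrr.
have -> : z2 = z1 + 1 by apply/le_anti; rewrite z21 lezD1 lt_neqAle eq_sym neq21.
by rewrite odd_abszS addrAC subrr add0r; case: (odd _).
Qed.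

(* For z = floor (m s) + k this is the parity of floor (s + k/m). *)
Definition parity_round (z : int) : bool := odd `|(z %/ m%:Z)%Z|.

Lemma parity_round_changes (X Y : int) : X <= Y <= X + m%:Z ->
  Y - X <= \sum_(k < m) (parity_round (X + k%:Z) != parity_round (Y + k%:Z) : nat)%:Z.
Proof.
case/andP => XY YXm; have [d {XY}dE] : exists d : nat, Y = X + d%:Z.
  by exists `|Y - X|%N; rewrite gez0_abs ?subr_ge0 // addrCA subrr addr0.
rewrite {Y}dE in YXm *.
have m_ge0 : 0 <= m%:Z by [].
rewrite (_ : X + d%:Z - X = \sum_(k < m) (divm (X + d%:Z + k%:Z) - divm (X + k%:Z))).
  apply: ler_sum => k _; apply: le_odd_abs_change; apply/andP; split.
    by apply: lez_pdiv2r => //; rewrite lerD2r lerDl.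
  rewrite (_ : divm (X + k%:Z) + 1 = divm (1 * m%:Z + (X + k%:Z))); last first.
    by rewrite /divm divzMDl 1?addrC // eqz_nat -lt0n.
  by apply: lez_pdiv2r => //; rewrite mul1r addrA lerD2r (addrC m%:Z).
by rewrite sumrB sum_divzD [LHS]addrC [RHS]addrC !addKr.
Qed.

Lemma parity_round_floor_changes (R : realType) (x y : R) : x <= y <= x + 1 ->
  m%:R * (y - x) - 1 <= \sum_(k < m)
    (parity_round (Num.floor (m%:R * x) + k%:Z)
       != parity_round (Num.floor (m%:R * y) + k%:Z) : nat)%:R.
Proof.
case/andP => xy yx1; set X := Num.floor _; set Y := Num.floor _.
have m_gt0R : (0 : R) < m%:R by rewrite ltr0n.
have XY : X <= Y by apply/le_floor/ler_wpM2l; [exact: ltW|].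
have := floor_le (m%:R * y); have := floorD1_gt (m%:R * y).
have := floor_le (m%:R * x); have := floorD1_gt (m%:R * x); rewrite -/X -/Y !intrD => Xu Xl Yu Yl.
have YXm : Y <= X + m%:Z.
  rewrite -ltzD1 -(ltr_int R) !intrD; nra.
have := parity_round_changes (introT andP (conj XY YXm)).
rewrite -(ler_int R) mulrz_sumr intrB; under eq_bigr do rewrite -pmulrn.
rewrite mulrBr; lra.
Qed.
End ParityRounding.

Section CouponGain.
Local Open Scope ring_scope.
Variable R : realDomainType.

Definition coupon_gain (v : R) : R := if v <= 1 then Num.max v 0 else 0.

Lemma coupon_gain_ge0 v : 0 <= coupon_gain v.
Proof. by rewrite /coupon_gain; case: ifP; rewrite ?le_max ?lexx ?orbT. Qed.

Lemma coupon_gain_le1 v : coupon_gain v <= 1.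
Proof. by rewrite /coupon_gain; case: ifP => // v1; rewrite ge_max v1 ler01. Qed.

Lemma coupon_gain_id v : 0 <= v <= 1 -> coupon_gain v = v.
Proof. by case/andP => v0 v1; rewrite /coupon_gain v1; apply/max_idPl. Qed.

Lemma coupon_gain_bool (b1 b2 : bool) : coupon_gain (b2%:R - b1%:R) = (~~ b1 && b2)%:R.
Proof.
by rewrite /coupon_gain; case: b1; case: b2 => /=; case: ifP => ?;
  rewrite /Num.max; try case: ltrP; lra.
Qed.

Lemma coupon_gain_shifts (t : R) : t \in [:: -1; 0; 1; 2] ->
  1 <= \sum_(y <- [:: -1; 0; 1; 2]) coupon_gain (y + t).
Proof.
move=> t_in; have [y y_in yt1] : exists2 y, y \in [:: -1; 0; 1; 2] & y + t = 1.
  move: t_in; rewrite !inE => /or4P[] /eqP->;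
    [exists 2 | exists 1 | exists 0 | exists (-1)]; rewrite ?inE ?eqxx ?orTb ?orbT //; lra.
rewrite (big_rem y) //= yt1 coupon_gain_id ?ler01 ?lexx // lerDl.
by apply: sumr_ge0 => z _; apply: coupon_gain_ge0.
Qed.

Lemma bool_offset_mem (b1 b2 b3 : bool) : (b1%:R - (b2%:R - b3%:R) : R) \in [:: -1; 0; 1; 2].
Proof.
rewrite !inE; case: b1; case: b2; case: b3 => /=; apply/or4P;
  first [ apply: Or41; apply/eqP; lra | apply: Or42; apply/eqP; lra
        | apply: Or43; apply/eqP; lra | apply: Or44; apply/eqP; lra ].
Qed.

End CouponGain.

Lemma coupon_gain_parity_round (R : realType) m (x y : R) : 0 < m ->
  (m%:R * coupon_gain (y - x) - 1 <= \sum_(k < m)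
    (parity_round m (Num.floor (m%:R * x) + k%:Z)
       != parity_round m (Num.floor (m%:R * y) + k%:Z) : nat)%:R)%R.
Proof.
move=> m_gt0; set S := (\sum_(k < m) _)%R.
have S_ge0 : (0 <= S)%R by apply: sumr_ge0.
rewrite /coupon_gain; case: ifP => yx1; last by rewrite mulr0 sub0r; lra.
have [yx0|] := lerP 0 (y - x); last by rewrite /Num.max; case: ltrP; rewrite ?mulr0; lra.
by apply: parity_round_floor_changes => //; apply/andP; split; lra.
Qed.

Lemma profit_coup_split (R : realType) n h E (p : nat -> R) :
  profit_coup n E p = (\sum_(e <- E_in n h E) coupon_gain (pe n p e)
                       + \sum_(e <- E_out n h E) coupon_gain (pe n p e))%R.
Proof. by rewrite /profit_coup (bigID (fun e => in_cust n e h)) /= !big_filter. Qed.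

Section LineOrder.
Variables (n h : nat) (E : seq customer).
Hypothesis h_item : 1 <= h <= n.

Definition line_item j := ((h + j).-1 %% n).+1.

Lemma line_itemE j : 1 <= j <= n.-1 -> line_item j = if h + j <= n then h + j else h + j - n.
Proof.
move=> j_range; rewrite /line_item; case: ifP => hjn; first by rewrite modn_small; lia.
by rewrite (_ : (h + j).-1 = (h + j - n).-1 + n) ?modnDr ?modn_small; lia.
Qed.

Lemma line_item_range j : 1 <= j <= n.-1 -> (1 <= line_item j <= n) && (line_item j != h).
Proof. by move=> j_range; rewrite line_itemE //; case: ifP; lia. Qed.

Lemma line_item_inj : {in iota 1 n.-1 &, injective line_item}.
Proof.
by move=> j k; rewrite !mem_iota => ? ?; rewrite !line_itemE; try lia; do 2 case: ifP; lia.
Qed.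

Lemma mem_lineseq i : 1 <= i <= n -> i != h -> i \in lineseq n h.
Proof.
move=> i_item i_h; apply/mapP; exists (if h < i then i - h else i + n - h).
  by rewrite mem_iota; case: ifP; lia.
by rewrite -/(line_item _) line_itemE; case: ifP; try case: ifP; lia.
Qed.

(* The items where e disagrees with h form an interval of the line: e itself
   when h is not in e, the gap of e when it is. *)
Lemma line_membership_convex e j1 j2 j3 : valid_cust n e ->
  1 <= j1 <= j2 -> j2 <= j3 <= n.-1 ->
  in_cust n e (line_item j1) != in_cust n e h ->
  in_cust n e (line_item j3) != in_cust n e h ->
  in_cust n e (line_item j2) != in_cust n e h.
Proof.
move=> + j12 j23; rewrite !line_itemE; try lia.
rewrite /valid_cust /in_cust; case: (cwrap e); do 3 case: ifP; lia.
Qed.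

Let vout_index :=
  [seq j <- iota 1 n.-1 | has (fun e => in_cust n e (line_item j)) (E_out n h E)].

Lemma VoutE : Vout n h E = map line_item vout_index.
Proof. by rewrite /Vout /lineseq filter_map. Qed.

Lemma Vout_uniq : uniq (Vout n h E).
Proof.
rewrite VoutE map_inj_in_uniq ?filter_uniq ?iota_uniq //.
by move=> j k; rewrite !mem_filter => /andP[_ ?] /andP[_ ?]; apply: line_item_inj.
Qed.

Lemma mem_Vout i : i \in Vout n h E -> (1 <= i <= n) && (i != h).
Proof.
rewrite VoutE => /mapP[j]; rewrite mem_filter mem_iota => /andP[_ j_range] ->.
by apply: line_item_range; lia.
Qed.

Lemma big_Vout (R : zmodType) (P : pred nat) (g : nat -> R) :
  (\sum_(i <- Vout n h E | P i) g i = \sum_(1 <= i < n.+1 | P i && (i \in Vout n h E)) g i)%R.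
Proof.
rewrite -big_filter -[RHS]big_filter /index_iota subSS subn0; apply: perm_big.
apply: uniq_perm; rewrite ?(filter_uniq _ Vout_uniq) ?filter_uniq ?iota_uniq // => i.
rewrite mem_filter [RHS]mem_filter mem_iota; case Vi: (i \in Vout n h E); rewrite ?andbF ?andbT //.
by have := mem_Vout Vi; case: (P i); lia.
Qed.

Lemma Vout_membership_convex e : valid_cust n e ->
  nth_convex 0 (fun i => in_cust n e i != in_cust n e h) (Vout n h E).
Proof.
move=> e_valid i j l /andP[ij jl]; rewrite VoutE size_map => l_size.
have index_range k : k < size vout_index -> 1 <= nth 0 vout_index k <= n.-1.
  by move=> k_size; have := mem_nth 0 k_size; rewrite mem_filter mem_iota add1n ltnS => /andP[].
have index_sorted : sorted leq vout_index.
  by apply: sorted_filter; [exact: leq_trans | exact: iota_sorted].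
have index_mono k k' : k <= k' -> k' < size vout_index ->
    nth 0 vout_index k <= nth 0 vout_index k'.
  by move=> kk' k'_size; apply: (sorted_leq_nth leq_trans leqnn 0 index_sorted); rewrite ?inE; lia.
rewrite !(nth_map 0); try lia.
have := index_range i (leq_ltn_trans (leq_trans ij jl) l_size).
have := index_range l l_size; have := index_mono i j ij (leq_ltn_trans jl l_size).
have := index_mono j l jl l_size.
clearbody vout_index => *.
by apply: (@line_membership_convex e (nth 0 vout_index i) _ (nth 0 vout_index l)) => //; lia.
Qed.

Lemma E_out_interval e : valid_cust n e -> ~~ in_cust n e h ->
  nth_convex 0 (in_cust n e) (Vout n h E).
Proof.
move=> e_valid h_e i j l ijl l_size; have := Vout_membership_convex e_valid ijl l_size.
by rewrite /= (negbTE h_e) !eqbF_neg !negbK.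
Qed.

Lemma E_in_complement_interval e : valid_cust n e -> in_cust n e h ->
  nth_convex 0 (predC (in_cust n e)) (Vout n h E).
Proof.
move=> e_valid h_e i j l ijl l_size; have := Vout_membership_convex e_valid ijl l_size.
by rewrite /= h_e !eqb_id.
Qed.

Lemma mem_Vout_E_out e i :
  e \in E_out n h E -> in_cust n e i -> 1 <= i <= n -> i \in Vout n h E.
Proof.
move=> e_out e_i i_item; rewrite /Vout mem_filter; apply/andP; split.
  by apply/hasP; exists e.
apply: mem_lineseq => //; apply/eqP => ih.
by move: e_out; rewrite mem_filter -ih e_i.
Qed.

Section Prices.
Local Open Scope ring_scope.
Variable R : realType.

Lemma pe_E_out e (g u : nat -> R) : e \in E_out n h E -> valid_cust n e ->
  (forall j, (j < size (Vout n h E))%N -> g (nth 0%N (Vout n h E) j) = u j.+1 - u j) ->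
  pe n g e = u (dag_arc n h E e).2 - u (dag_arc n h E e).1.
Proof.
move=> e_out e_valid g_increment.
have h_e : ~~ in_cust n e h by move: e_out; rewrite mem_filter => /andP[].
rewrite -(telescope_interval g_increment (E_out_interval e_valid h_e)) big_Vout.
rewrite /pe big_nat_cond [RHS]big_nat_cond; apply: eq_bigl => i.
case i_item: (1 <= i < n.+1)%N => //=; case e_i: (in_cust n e i) => //=.
by rewrite (mem_Vout_E_out e_out e_i).
Qed.

Lemma pe_split_item e (g : nat -> R) : in_cust n e h ->
  pe n g e = g h + \sum_(1 <= i < n.+1 | in_cust n e i && (i != h)) g i.
Proof.
move=> h_e; rewrite /pe big_mkcond (bigD1_seq h) ?iota_uniq //=; last by rewrite mem_index_iota.
rewrite h_e; congr (_ + _); rewrite [LHS]big_mkcond [RHS]big_mkcond; apply: eq_bigr => i _.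
by case: (i != h); case: (in_cust n e i).
Qed.

Lemma tau_price_nth_Vout B (y : R) j : (j < size (Vout n h E))%N ->
  tau_price n h E B y (nth 0%N (Vout n h E) j) = (B j.+1)%:R - (B j)%:R.
Proof.
move=> j_size; have j_in := mem_nth 0%N j_size.
have /andP[_ j_h] := mem_Vout j_in.
by rewrite /tau_price (negbTE j_h) j_in index_uniq // Vout_uniq.
Qed.

Lemma pe_tau_E_in B e : B 0%N = false -> valid_cust n e -> in_cust n e h ->
  exists2 t : R, t \in [:: -1; 0; 1; 2] & forall y, pe n (tau_price n h E B y) e = y + t.
Proof.
move=> B0 e_valid h_e; set vo := Vout n h E.
set a := find (predC (in_cust n e)) vo; set c := count (predC (in_cust n e)) vo.
exists ((B (size vo))%:R - ((B (a + c)%N)%:R - (B a)%:R)); first exact: bool_offset_mem.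
move=> y; rewrite pe_split_item // {1}/tau_price eqxx; congr (_ + _).
have tau_increment := tau_price_nth_Vout B y.
have := telescope_seq tau_increment; rewrite (bigID (in_cust n e)) /=.
rewrite (telescope_interval tau_increment (E_in_complement_interval e_valid h_e)) B0 subr0.
move=> <-; rewrite addrK big_Vout (bigID (mem vo)) /= [X in _ + X]big1 ?addr0.
  apply: eq_bigl => i; case i_vo: (i \in vo); rewrite ?andbF ?andbT //.
  by have /andP[_ ->] := mem_Vout i_vo; rewrite andbT.
by move=> i /andP[/andP[_ i_h] i_vo]; rewrite /tau_price (negbTE i_h) -/vo (negbTE i_vo).
Qed.

End Prices.

End LineOrder.

Section Bounds.
Local Open Scope ring_scope.
Variables (R : realType) (n h : nat) (E : seq customer).
Hypotheses (E_valid : all (valid_cust n) E) (h_item : (1 <= h <= n)%N).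

Lemma E_out_valid e : e \in E_out n h E -> valid_cust n e.
Proof. by rewrite mem_filter => /andP[_ /(allP E_valid)]. Qed.

Lemma E_in_valid e : e \in E_in n h E -> valid_cust n e /\ in_cust n e h.
Proof. by rewrite mem_filter => /andP[h_e /(allP E_valid)]. Qed.

Lemma sum_E_in_gain_le (q : nat -> R) :
  \sum_(e <- E_in n h E) coupon_gain (pe n q e) <= (size (E_in n h E))%:R.
Proof.
rewrite -count_predT -sumr_bool_count; apply: ler_sum => e _; exact: coupon_gain_le1.
Qed.

Lemma profit_sigma_ge : (size (E_in n h E))%:R <= profit_coup n E (sigma_price R h).
Proof.
rewrite (profit_coup_split _ h) -count_predT -sumr_bool_count -[X in X <= _]addr0.
apply: lerD; last by apply: sumr_ge0 => e _; apply: coupon_gain_ge0.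
rewrite big_seq [X in _ <= X]big_seq; apply: ler_sum => e /E_in_valid[_ h_e].
rewrite (pe_split_item h_item) // big1 => [|i /andP[_ i_h]]; last first.
  by rewrite /sigma_price (negbTE i_h).
by rewrite /sigma_price eqxx addr0 coupon_gain_id ?ler01 ?lexx.
Qed.

Lemma profit_tau_E_out B (y : R) :
  \sum_(e <- E_out n h E) coupon_gain (pe n (tau_price n h E B y) e) = (dicut_value n h E B)%:R.
Proof.
rewrite /dicut_value -sumr_bool_count; apply: eq_big_seq => e e_out.
rewrite (pe_E_out h_item (u := fun j => (B j)%:R) e_out (E_out_valid e_out)).
  exact: coupon_gain_bool.
exact: tau_price_nth_Vout.
Qed.

Lemma profit_tau_ge B x : B 0%N = false ->
  (forall y : R, y \in [:: -1; 0; 1; 2] ->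
     profit_coup n E (tau_price n h E B y) <= profit_coup n E (tau_price n h E B x)) ->
  4 * (dicut_value n h E B)%:R + (size (E_in n h E))%:R
    <= 4 * profit_coup n E (tau_price n h E B x).
Proof.
move=> B0 x_max.
pose gain_in (y : R) := \sum_(e <- E_in n h E) coupon_gain (pe n (tau_price n h E B y) e).
have profit_tau y : profit_coup n E (tau_price n h E B y) = gain_in y + (dicut_value n h E B)%:R.
  by rewrite (profit_coup_split _ h) profit_tau_E_out.
have in_ge : (size (E_in n h E))%:R <= \sum_(y <- [:: -1; 0; 1; 2]) gain_in y.
  rewrite exchange_big -count_predT -sumr_bool_count big_seq [X in _ <= X]big_seq.
  apply: ler_sum => e /E_in_valid[e_valid h_e].
  have [t t_in pe_t] := pe_tau_E_in E h_item R B0 e_valid h_e.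
  by under eq_bigr do rewrite pe_t; apply: coupon_gain_shifts.
have sum_le : \sum_(y <- [:: -1; 0; 1; 2]) profit_coup n E (tau_price n h E B y)
    <= \sum_(y <- [:: -1; 0; 1; 2] : seq R) profit_coup n E (tau_price n h E B x).
  by rewrite big_seq [X in _ <= X]big_seq; apply: ler_sum => y; apply: x_max.
move: in_ge sum_le; rewrite !big_cons !big_nil !profit_tau; lra.
Qed.

Lemma dicut_value_complement (B : nat -> bool) :
  (dicut_value n h E B + dicut_value n h E (negb \o B))%N =
  count (fun e => B (dag_arc n h E e).1 != B (dag_arc n h E e).2) (E_out n h E).
Proof.
rewrite /dicut_value -count_predUI [count (predI _ _) _](eq_count (a2 := pred0)).
  by rewrite count_pred0 addn0; apply: eq_count => e /=; case: (B _); case: (B _).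
by move=> e /=; case: (B _); case: (B _).
Qed.

Lemma rounded_cuts_ge (q : nat -> R) (m : nat) : (0 < m)%N -> exists Bk : nat -> nat -> bool,
  m%:R * \sum_(e <- E_out n h E) coupon_gain (pe n q e) - (size (E_out n h E))%:R
    <= \sum_(k < m) (dicut_value n h E (Bk k) + dicut_value n h E (negb \o Bk k))%:R.
Proof.
move=> m_gt0; set vo := Vout n h E; pose S j := \sum_(0 <= i < j) q (nth 0%N vo i).
pose Bk k j := parity_round m (Num.floor (m%:R * S j) + k%:Z); exists Bk.
have S_increment j : (j < size vo)%N -> q (nth 0%N vo j) = S j.+1 - S j.
  by move=> _; rewrite /S big_nat_recr //= addrAC subrr add0r.
have arc_ge e : e \in E_out n h E -> m%:R * coupon_gain (pe n q e) - 1 <=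
    \sum_(k < m) (Bk k (dag_arc n h E e).1 != Bk k (dag_arc n h E e).2 : nat)%:R.
  move=> e_out; rewrite (pe_E_out h_item e_out (E_out_valid e_out) S_increment).
  exact: coupon_gain_parity_round.
rewrite mulr_sumr -count_predT -sumr_bool_count -sumrB big_seq.
apply: le_trans (ler_sum _ arc_ge) _; rewrite -big_seq exchange_big /=.
by apply: ler_sum => k _; rewrite dicut_value_complement -sumr_bool_count.
Qed.

Lemma FG_cut_bound Bset (q : nat -> R) :
  (forall B', FG_ratio * (dicut_value n h E B')%:R <= (dicut_value n h E Bset)%:R :> R) ->
  FG_ratio * \sum_(e <- E_out n h E) coupon_gain (pe n q e)
    <= 2 * (dicut_value n h E Bset)%:R.
Proof.
move=> FG_approx; have FG_ge0 : 0 <= FG_ratio :> R by rewrite divr_ge0 ?ler0n.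
apply: (le_natmul_slack (b := FG_ratio * (size (E_out n h E))%:R)) => [|m m_gt0].
  by rewrite mulr_ge0 ?ler0n.
have [Bk cuts_ge] := rounded_cuts_ge q m_gt0.
have := ler_wpM2l FG_ge0 cuts_ge; rewrite mulrBr mulrCA => /le_trans; apply.
rewrite mulr_sumr (le_trans (y := \sum_(k < m) 2 * (dicut_value n h E Bset)%:R)) //.
  apply: ler_sum => k _; rewrite natrD mulrDr mulr_natl mulr2n.
  by apply: lerD; apply: FG_approx.
by rewrite sumr_const card_ord [X in _ <= X]mulr_natl.
Qed.

End Bounds.

Local Open Scope ring_scope.

Theorem theorem5 (R : realType) (n : nat) (E : seq customer)
  (h : nat) (Bset : nat -> bool) (x : R) (p : nat -> R) :
  all (valid_cust n) E ->
  (1 <= h <= n)%N ->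
  Bset 0%N = false ->
  (forall B' : nat -> bool,
      FG_ratio * (dicut_value n h E B')%:R <= (dicut_value n h E Bset)%:R :> R) ->
  x \in [:: -1; 0; 1; 2] ->
  (forall y : R, y \in [:: -1; 0; 1; 2] ->
      profit_coup n E (tau_price n h E Bset y) <= profit_coup n E (tau_price n h E Bset x)) ->
  (p = sigma_price R h \/ p = tau_price n h E Bset x) ->
  profit_coup n E (sigma_price R h) <= profit_coup n E p ->
  profit_coup n E (tau_price n h E Bset x) <= profit_coup n E p ->
  forall q : nat -> R, profit_coup n E q <= (2747%:R / 1000%:R) * profit_coup n E p.
Proof.
move=> E_valid h_item B0 FG_approx _ x_max _ sigma_le tau_le q.
have sigma_ge := profit_sigma_ge R E_valid h_item.
have tau_ge := profit_tau_ge E_valid h_item B0 x_max.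
have out_le := FG_cut_bound E_valid h_item q FG_approx.
have in_le := sum_E_in_gain_le n h E q.
have D_ge0 : 0 <= (dicut_value n h E Bset)%:R :> R by [].
rewrite (profit_coup_split _ h); move: out_le; rewrite /FG_ratio; lra.
Qed.
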